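(* Let $V$ be a finite vertex set with $|V|=n$ and $\{k_u\}_{u\in V}$ a degree sequence with $k_u\ge 1$ for all $u$, such that some vertex has odd degree and some vertex $v$ has $k_v-(n-1)$ negative or odd. Then every multiloop-graph $G$ on $V$ with degree sequence $\{k_u\}$ can be transformed, by a finite sequence of double edge swaps all of whose intermediate graphs are multiloop-graphs with degree sequence $\{k_u\}$, into a multiloop-graph having exactly $\lfloor k_u/2\rfloor$ self-loops at every vertex $u$ (so that its non-loop edges form a simple graph with degree sequence $\{k_u \bmod 2\}$, i.e. a perfect matching on the odd-degree vertices).
   Context: All graphs are on a fixed labeled vertex set $V$; a graph is a multiset $E$ of unordered pairs $(u,v)$ with $u,v\in V$, where a pair $(u,u)$ is a self-loop. The degree $k_u$ of $u$ is the number of edge-endpoints at $u$, so each self-loop at $u$ contributes $2$ to $k_u$. A multiloop-graph is such a graph in which self-loops may occur with any multiplicity but every non-loop edge $(u,v)$, $u\ne v$, occurs at most once. A double edge swap $(u,v),(x,y)\leadsto(u,x),(v,y)$ removes one copy of each of two edge occurrences $(u,v)$ and $(x,y)$ (loops allowed) and adds the edges $(u,x)$ and $(v,y)$; either pairing of endpoints may be used. It preserves the degree sequence. *)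

From Stdlib Require Import Relations.
From mathcomp Require Import all_boot.
Set Implicit Arguments. Unset Strict Implicit. Unset Printing Implicit Defensive.

(* A graph on the vertex set V is a finite multiset of unordered pairs,
   represented by a list of ordered pairs; the orientation and the order of
   the list are irrelevant, as only [emult] and [deg] are ever observed. *)
Definition graph (V : finType) := seq (V * V).

Definition emult (V : finType) (G : graph V) (a b : V) : nat :=
  count (fun e => (e == (a, b)) || (e == (b, a))) G.

Definition geq (V : finType) (G H : graph V) : Prop :=
  forall a b, emult G a b = emult H a b.

(* degree: number of edge-endpoints at w (a loop counts twice) *)
Definition deg (V : finType) (G : graph V) (w : V) : nat :=
  count (fun e => e.1 == w) G + count (fun e => e.2 == w) G.

Definition multiloop (V : finType) (G : graph V) : Prop :=
  forall a b, a != b -> emult G a b <= 1.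

(* H arises from G by one double edge swap (u,v),(x,y) ~> (u,x),(v,y);
   the other pairing is covered by choosing the representative (v,u). *)
Definition dswap (V : finType) (G H : graph V) : Prop :=
  exists u v x y (rest : graph V),
    geq G ((u, v) :: (x, y) :: rest) /\ geq H ((u, x) :: (v, y) :: rest).

Definition admissible_step (V : finType) (k : V -> nat) (G H : graph V) : Prop :=
  dswap G H /\ multiloop H /\ (forall w, deg H w = k w).

From Pilot Require Import Defs.
From Stdlib Require Import Relations Classical.
From mathcomp Require Import all_boot zify.
Set Implicit Arguments. Unset Strict Implicit. Unset Printing Implicit Defensive.

(* Let nloops G be the total number of self-loops; it is at most \sum_u floor(k_u/2), with
   equality exactly for the target graphs, so it suffices to show that while some vertex u
   has fewer than floor(k_u/2) loops, admissible swaps lead to a graph with more loops.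
   Such a u has two non-loop neighbours v, w. If some wedge b-a-c has b, c non-adjacent,
   the swap (a,b),(a,c) ~> (a,a),(b,c) adds a loop. Otherwise the non-loop edges form
   disjoint cliques, and the clique C of u contains u, v, w. An edge outside C, or (when
   |C| >= 4) a loop at a vertex outside C, can be swapped into C so as to re-create an open
   wedge without losing loops overall. What remains is excluded by the hypotheses on k:
   if C = V then k_x = 2 loops(x) + (n - 1) for every x, and if C is a triangle and all
   other vertices carry only loops then every degree is even. *)

Section Graphs.
Variable V : finType.
Implicit Types (G H R : graph V) (a b p q r s w x : V).

Definition upair p q a b : bool := ((p, q) == (a, b)) || ((p, q) == (b, a)).

Lemma emult_cons p q R a b : emult ((p, q) :: R) a b = upair p q a b + emult R a b.
Proof. by []. Qed.

Lemma upairC p q a b : upair q p a b = upair p q a b.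
Proof. by rewrite /upair !xpair_eqE; do 2!case: (_ == a); do 2!case: (_ == b). Qed.

Lemma emultC G a b : emult G a b = emult G b a.
Proof. by apply: eq_count => e; rewrite orbC. Qed.

Lemma emult_upair G p q a b : upair p q a b -> emult G p q = emult G a b.
Proof. by rewrite /upair !xpair_eqE => /orP[] /andP[/eqP-> /eqP->] //; rewrite emultC. Qed.

Lemma upair_wedge a b c : upair a b a c = (b == c).
Proof.
rewrite /upair !xpair_eqE eqxx /=; have [->|bc] := eqVneq b c; rewrite ?orbT //=.
by apply/andP => -[/eqP ac /eqP ba]; move: bc; rewrite ba ac eqxx.
Qed.

Lemma upair_trans p q r s a b : upair p q a b -> upair r s a b -> upair p q r s.
Proof.
rewrite /upair !xpair_eqE.
by do 2![case/orP => /andP[/eqP-> /eqP->]]; rewrite !eqxx ?orbT.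
Qed.

Lemma upair_neq p q a b : upair p q a b -> a != b -> p != q.
Proof. by rewrite /upair !xpair_eqE => /orP[] /andP[/eqP-> /eqP->] //; rewrite eq_sym. Qed.

Lemma sum_upair_diag p q : \sum_w (upair p q w w : nat) = (p == q).
Proof.
under eq_bigr => w _ do rewrite /upair orbb xpair_eqE.
have [<-|pq] := eqVneq p q.
  by rewrite (bigD1 p) //= eqxx big1 // => w /negbTE; rewrite eq_sym => ->.
rewrite big1 // => w _; apply/eqP; rewrite eqb0; apply: contra pq.
by case/andP => /eqP-> /eqP->.
Qed.

Lemma upair_endpoints p q w :
  (p == w) + (q == w) = 2 * upair p q w w + \sum_(x | x != w) (upair p q w x : nat).
Proof.
have sum_eq1 c : \sum_(x | x != w) ((c == x) : nat) = (c != w).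
  have [->|cw] := eqVneq c w; first by rewrite big1 // => x /negbTE; rewrite eq_sym => ->.
  by rewrite (bigD1 c) //= eqxx big1 // => x /andP[_ /negbTE]; rewrite eq_sym => ->.
rewrite /upair; under eq_bigr => x _ do rewrite !xpair_eqE.
rewrite !xpair_eqE orbb.
have [->|pw] := eqVneq p w; have [->|qw] := eqVneq q w => /=.
- by rewrite big1 // => x /negbTE; rewrite eq_sym => ->.
- by under eq_bigr => x _ do rewrite andbF orbF; rewrite sum_eq1 qw.
- by under eq_bigr => x _ do rewrite andbT; rewrite sum_eq1 pw.
- by rewrite big1 // => x _; rewrite andbF.
Qed.

Lemma degE G w : deg G w = 2 * emult G w w + \sum_(x | x != w) emult G w x.
Proof.
elim: G => [|[p q] G IHG]; first by rewrite /deg /emult big1.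
have -> : deg ((p, q) :: G) w = (p == w) + (q == w) + deg G w by rewrite /deg /=; lia.
rewrite IHG upair_endpoints emult_cons.
under [in RHS]eq_bigr => x _ do rewrite emult_cons.
rewrite big_split /=; lia.
Qed.

Lemma deg_geq G H w : Defs.geq G H -> deg G w = deg H w.
Proof. by move=> GH; rewrite !degE GH; congr (_ + _); apply: eq_bigr => x _. Qed.

Lemma emult_gt0_cons G a b : 0 < emult G a b -> exists R, Defs.geq G ((a, b) :: R).
Proof.
rewrite /emult -has_count => /hasP[e eG abe].
exists (rem e G) => x y.
have -> : emult G x y = emult (e :: rem e G) x y by exact/permP/perm_to_rem.
by case/orP: abe => /eqP->; rewrite !emult_cons // upairC.
Qed.

Lemma deg_isolated G z : (forall x, x != z -> emult G z x = 0) -> deg G z = 2 * emult G z z.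
Proof. by move=> isoz; rewrite degE big1 ?addn0. Qed.

Definition nloops G := \sum_w emult G w w.

Definition swapped G p q r s H :=
  exists R, Defs.geq G ((p, q) :: (r, s) :: R) /\ Defs.geq H ((p, r) :: (q, s) :: R).

Section Swapped.
Variables (G H : graph V) (p q r s : V).
Hypothesis sw : swapped G p q r s H.

Lemma emult_swapped a b : emult H a b + upair p q a b + upair r s a b
                          = emult G a b + upair p r a b + upair q s a b.
Proof. by case: sw => R [-> ->]; rewrite !emult_cons; lia. Qed.

Lemma nloops_swapped : nloops H + (p == q) + (r == s) = nloops G + (p == r) + (q == s).
Proof.
rewrite -!sum_upair_diag /nloops -!big_split.
by apply: eq_bigr => w _; exact: emult_swapped.
Qed.

Lemma swapped_edge_new : 0 < emult H p r.
Proof. by case: sw => R [_ ->]; rewrite emult_cons /upair eqxx. Qed.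

Lemma swapped_edge_new' : 0 < emult H q s.
Proof. by case: sw => R [_ ->]; rewrite !emult_cons {2}/upair eqxx addnCA. Qed.

Lemma swapped_edge_kept a b :
  ~~ upair p q a b -> ~~ upair r s a b -> 0 < emult G a b -> 0 < emult H a b.
Proof.
case: sw => R [-> ->]; rewrite !emult_cons => /negbTE-> /negbTE->.
by rewrite !add0n => /leq_trans; apply; rewrite addnA leq_addl.
Qed.

Lemma swapped_nonedge_kept a b :
  ~~ upair p r a b -> ~~ upair q s a b -> emult G a b = 0 -> emult H a b = 0.
Proof.
case: sw => R [-> ->]; rewrite !emult_cons => /negbTE-> /negbTE->.
by rewrite !add0n => /eqP; rewrite !addn_eq0 => /andP[_ /andP[_ /eqP]].
Qed.

Lemma deg_swapped w : deg H w = deg G w.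
Proof. by case: sw => R [GE HE]; rewrite (deg_geq w GE) (deg_geq w HE) /deg /=; lia. Qed.

Lemma multiloop_swapped : multiloop G ->
  (p != r -> emult G p r = 0) -> (q != s -> emult G q s = 0) ->
  (p != r -> q != s -> ~~ upair p r q s) -> multiloop H.
Proof.
case: sw => R [GE HE] mlG pr0 qs0 pr_qs a b ab.
have R0 c d : upair c d a b -> emult G c d = 0 -> emult R a b = 0.
  move=> cd_ab; rewrite (emult_upair G cd_ab) GE !emult_cons => /eqP.
  by rewrite !addn_eq0 => /and3P[_ _ /eqP].
have := mlG a b ab; rewrite HE GE !emult_cons.
case pr_ab: (upair p r a b); case qs_ab: (upair q s a b) => /=.
- by move: (pr_qs (upair_neq pr_ab ab) (upair_neq qs_ab ab)); rewrite (upair_trans pr_ab qs_ab).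
- by rewrite (R0 _ _ pr_ab) // pr0 // (upair_neq pr_ab ab).
- by rewrite (R0 _ _ qs_ab) // qs0 // (upair_neq qs_ab ab).
- by rewrite !add0n => /(leq_trans _); apply; rewrite addnA leq_addl.
Qed.

End Swapped.

Lemma two_in_support (P : pred V) (f : V -> nat) :
  (forall x, P x -> f x <= 1) -> 1 < \sum_(x | P x) f x ->
  exists x y, [/\ P x, P y, x != y, 0 < f x & 0 < f y].
Proof.
have support Q : 0 < \sum_(x | Q x) f x -> exists2 x, Q x & 0 < f x.
  rewrite lt0n sum_nat_eq0 negb_forall_in => /exists_inP[x Qx fx].
  by exists x; rewrite ?lt0n.
move=> le1 gt1; have [x Px fx] := support P (ltnW gt1).
move: gt1; rewrite (bigD1 x) //= => gt1.
have [|y /andP[Py yx] fy] := support (fun y => P y && (y != x)).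
  by have := le1 x Px; lia.
by exists x, y; rewrite eq_sym.
Qed.

End Graphs.

Ltac neq_simp :=
  repeat match goal with
  | ne : is_true (?a != ?b) |- context [?a == ?b] => rewrite (negbTE ne)
  | ne : is_true (?a != ?b) |- context [?b == ?a] => rewrite [b == a]eq_sym (negbTE ne)
  end;
  rewrite ?eqxx /= ?andbF ?andbT ?orbF ?orbT /=.

Ltac upair_simp := rewrite /upair !xpair_eqE; neq_simp.

Section Swaps.
Variables (V : finType) (k : V -> nat).
Implicit Types (G H R : graph V) (a b c p q r s t u v w x y z : V).
Local Notation reach := (clos_refl_trans (graph V) (admissible_step k)).

Definition admissible G := multiloop G /\ forall w, deg G w = k w.

Lemma reach_admissible G H : admissible G -> reach G H -> admissible H.
Proof.
move=> + GH; elim: GH => [x y [_ ?] _ //| //| x y z _ IHxy _ IHyz].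
by move=> /IHxy/IHyz.
Qed.

Lemma swap_step G p q r s : admissible G ->
  0 < emult G p q -> 0 < emult G r s -> ~~ upair p q r s ->
  (p != r -> emult G p r = 0) -> (q != s -> emult G q s = 0) ->
  (p != r -> q != s -> ~~ upair p r q s) ->
  exists2 H, admissible_step k G H & swapped G p q r s H.
Proof.
move=> [mlG degG] Gpq Grs pq_rs pr0 qs0 pr_qs.
have [R1 GR1] := emult_gt0_cons Gpq.
have [R GR] : exists R, Defs.geq R1 ((r, s) :: R).
  by apply: emult_gt0_cons; move: Grs; rewrite GR1 emult_cons (negbTE pq_rs).
have sw : swapped G p q r s ((p, r) :: (q, s) :: R).
  by exists R; split=> // a b; rewrite GR1 !emult_cons GR emult_cons.
exists ((p, r) :: (q, s) :: R) => //.
split; first by case: sw => R' GHE; exists p, q, r, s, R'.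
split; first exact: multiloop_swapped sw mlG pr0 qs0 pr_qs.
by move=> w; rewrite (deg_swapped sw).
Qed.

Lemma wedge_step G a b c : admissible G -> b != c ->
  0 < emult G a b -> 0 < emult G a c -> emult G b c = 0 ->
  exists2 H, admissible_step k G H & swapped G a b a c H.
Proof. by move=> aG bc Gab Gac Gbc; apply: swap_step; rewrite ?upair_wedge ?eqxx //. Qed.

Definition loop_gainable G := exists2 H, reach G H & nloops G < nloops H.

Lemma loop_gainable_reach G H :
  reach G H -> nloops G <= nloops H -> loop_gainable H -> loop_gainable G.
Proof.
move=> GH le_GH [K HK lt_HK]; exists K; last exact: leq_ltn_trans lt_HK.
exact: rt_trans HK.
Qed.

Lemma open_wedge_gainable G a b c : admissible G ->
  a != b -> a != c -> b != c ->
  0 < emult G a b -> 0 < emult G a c -> emult G b c = 0 -> loop_gainable G.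
Proof.
move=> aG ab ac bc Gab Gac Gbc; have [H GH sw] := wedge_step aG bc Gab Gac Gbc.
exists H; first exact: rt_step.
by move: (nloops_swapped sw); neq_simp; rewrite !addn0 addn1 => <-.
Qed.

Definition wedge_closed G := forall a b c, a != b -> a != c -> b != c ->
  0 < emult G a b -> 0 < emult G a c -> 0 < emult G b c.

Definition closed_nbhd G u : {set V} := [set x | (x == u) || (0 < emult G u x)].

Section WedgeClosed.
Variables (G : graph V) (u v w : V).
Hypotheses (aG : admissible G) (wcG : wedge_closed G).
Hypotheses (vu : v != u) (wu : w != u) (vw : v != w).
Hypotheses (Guv : 0 < emult G u v) (Guw : 0 < emult G u w).
Local Notation C := (closed_nbhd G u).

Lemma nbhd_u : u \in C. Proof. by rewrite inE eqxx. Qed.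
Lemma nbhd_v : v \in C. Proof. by rewrite inE Guv orbT. Qed.
Lemma nbhd_w : w \in C. Proof. by rewrite inE Guw orbT. Qed.

Lemma nbhd_neq x y : x \in C -> y \notin C -> x != y.
Proof. by move=> xC; apply: contraNneq => <-. Qed.

Lemma closed_nbhd_edge x y : x \in C -> y \in C -> x != y -> 0 < emult G x y.
Proof.
rewrite !inE => /orP[/eqP-> | Gux] /orP[/eqP-> | Guy] xy //; first by rewrite eqxx in xy.
- by rewrite emultC.
have [->|xu] := eqVneq x u; first by [].
have [->|yu] := eqVneq y u; first by rewrite emultC.
by apply: (wcG _ _ xy Gux Guy); rewrite eq_sym.
Qed.

Lemma closed_nbhd_out x y : x \in C -> y \notin C -> emult G x y = 0.
Proof.
move=> xC; apply: contraNeq; rewrite -lt0n !inE in xC * => Gxy.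
case/orP: xC => [/eqP xu | Gux]; first by rewrite -xu Gxy orbT.
have [-> | yu] := eqVneq y u; first by [].
have [xu | xu] := eqVneq x u; first by rewrite -xu Gxy orbT.
have [xy | xy] := eqVneq x y; first by rewrite -xy Gux orbT.
by rewrite (@wcG x u y xu xy) ?orbT // 1?eq_sym // emultC.
Qed.

Lemma emult_closed_nbhd x y : x \in C -> y != x -> emult G x y = (y \in C).
Proof.
move=> xC yx; case: (boolP (y \in C)) => [yC | /(closed_nbhd_out xC)//].
have xy : x != y by rewrite eq_sym.
by apply/eqP; rewrite /= eqn_leq aG.1 // closed_nbhd_edge.
Qed.

Lemma deg_closed_nbhd y : y \in C -> k y = 2 * emult G y y + #|C|.-1.
Proof.
move=> yC; rewrite -aG.2 degE (cardsD1 y) yC add1n /=; congr (_ + _).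
rewrite -sum1_card [RHS](eq_bigl (fun x => (x != y) && (x \in C))) => [|x]; last first.
  by rewrite !inE.
by rewrite big_mkcondr; apply: eq_bigr => x xy; rewrite emult_closed_nbhd //; case: (_ \in _).
Qed.

(* The swap (u,v),(o,p) ~> (u,o),(v,p) keeps the loops and opens the wedge o-u-w. *)
Lemma far_edge_gainable o p : o \notin C -> p != o -> 0 < emult G o p ->
  loop_gainable G.
Proof.
move=> oC po Gop.
have pC : p \notin C.
  by apply: contraL Gop => pC; rewrite emultC (closed_nbhd_out pC oC).
have uo := nbhd_neq nbhd_u oC; have vo := nbhd_neq nbhd_v oC.
have wo := nbhd_neq nbhd_w oC; have up := nbhd_neq nbhd_u pC.
have vp := nbhd_neq nbhd_v pC; have wp := nbhd_neq nbhd_w pC.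
have uv : u != v by rewrite eq_sym.
have [H GH sw] : exists2 H, admissible_step k G H & swapped G u v o p H.
  apply: swap_step => //; try by upair_simp.
  - by move=> _; rewrite (closed_nbhd_out nbhd_u oC).
  - by move=> _; rewrite (closed_nbhd_out nbhd_v pC).
apply: (loop_gainable_reach (rt_step _ _ _ _ GH)).
  by move: (nloops_swapped sw); neq_simp; rewrite !addn0 => ->.
apply: (@open_wedge_gainable H u o w) => //; try by rewrite eq_sym.
- by case: GH.
- exact: swapped_edge_new sw.
- by apply: (swapped_edge_kept sw) => //; upair_simp.
- apply: (swapped_nonedge_kept sw); try by upair_simp.
  by rewrite emultC (closed_nbhd_out nbhd_w oC).
Qed.

(* The swap (z,z),(u,v) ~> (z,u),(z,v) costs a loop; closing the wedges z-u-w
   and then z-v-t gains two. *)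
Lemma isolated_loop_gainable z t : z \notin C ->
  (forall x, x != z -> emult G z x = 0) -> 0 < k z ->
  t \in C -> t \notin [set u; v; w] -> loop_gainable G.
Proof.
move=> zC isoz kz tC; rewrite !inE !negb_or => /andP[/andP[tu tv] tw].
have Gzz : 0 < emult G z z by move: kz; rewrite -aG.2 deg_isolated // muln_gt0.
have uz := nbhd_neq nbhd_u zC; have vz := nbhd_neq nbhd_v zC.
have wz := nbhd_neq nbhd_w zC; have tz := nbhd_neq tC zC.
have uv : u != v by rewrite eq_sym.
have [H1 GH1 sw1] : exists2 H1, admissible_step k G H1 & swapped G z z u v H1.
  apply: swap_step; rewrite ?upair_wedge //; first by upair_simp.
  - by move=> _; apply: isoz.
  - by move=> _; apply: isoz.
have aH1 : admissible H1 by case: GH1.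
have [H2 GH2 sw2] : exists2 H2, admissible_step k H1 H2 & swapped H1 u z u w H2.
  apply: wedge_step => //; first by rewrite eq_sym.
  - by rewrite emultC (swapped_edge_new sw1).
  - by apply: (swapped_edge_kept sw1) => //; upair_simp.
  - by apply: (swapped_nonedge_kept sw1); [upair_simp | upair_simp | apply: isoz].
have aH2 : admissible H2 by case: GH2.
apply: (loop_gainable_reach (rt_trans _ _ _ _ _ (rt_step _ _ _ _ GH1) (rt_step _ _ _ _ GH2))).
  move: (nloops_swapped sw1) (nloops_swapped sw2); neq_simp.
  by rewrite !addn0 => <- ->.
apply: (@open_wedge_gainable H2 v z t) => //; try by rewrite eq_sym.
- apply: (swapped_edge_kept sw2); try by upair_simp.
  by rewrite emultC (swapped_edge_new' sw1).
- apply: (swapped_edge_kept sw2); try by upair_simp.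
  apply: (swapped_edge_kept sw1); try by upair_simp.
  by apply: closed_nbhd_edge nbhd_v tC _; rewrite eq_sym.
- apply: (swapped_nonedge_kept sw2); try by upair_simp.
  by apply: (swapped_nonedge_kept sw1); [upair_simp | upair_simp | apply: isoz].
Qed.

End WedgeClosed.

Lemma two_neighbours G u : admissible G -> emult G u u != (k u)./2 ->
  exists v w, [/\ v != u, w != u, v != w, 0 < emult G u v & 0 < emult G u w].
Proof.
move=> aG; rewrite -aG.2 degE => partial_u.
apply: two_in_support => [x xu | ]; first by apply: aG.1; rewrite eq_sym.
rewrite ltnNge; apply: contra partial_u => le1.
by rewrite eqn_leq leq_half_double geq_half_double -mul2n leq_addr -(addn1 (2 * _)) leq_add2l.
Qed.

Lemma nloops_le G : admissible G -> nloops G <= \sum_u (k u)./2.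
Proof.
move=> aG; apply: leq_sum => w _.
by rewrite -aG.2 degE geq_half_double -mul2n leq_addr.
Qed.

Section Gain.
Hypothesis hpos : forall u, 1 <= k u.
Hypothesis hodd : exists u, odd (k u).
Hypothesis hv : exists v, (k v < #|V|.-1) || odd (k v - #|V|.-1).

Lemma loop_gainable_not_full G u : admissible G -> emult G u u != (k u)./2 ->
  loop_gainable G.
Proof.
move=> aG partial_u; have [v [w [vu wu vw Guv Guw]]] := two_neighbours aG partial_u.
apply: NNPP => stuck.
have wcG : wedge_closed G.
  move=> a b c ab ac bc Gab Gac; rewrite lt0n; apply/eqP => Gbc.
  exact/stuck/(open_wedge_gainable aG ab ac bc Gab Gac Gbc).
set C := closed_nbhd G u.
have isolated z : z \notin C -> forall x, x != z -> emult G z x = 0.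
  move=> zC x xz; apply/eqP; rewrite -leqn0 leqNgt; apply/negP => Gzx.
  exact/stuck/(far_edge_gainable aG wcG vu wu vw Guv Guw zC xz Gzx).
have [CT | /subsetPn[z _ zC]] := boolP ([set: V] \subset C).
  have cardC : #|C| = #|V| by rewrite -cardsT (_ : C = [set: V]) //; apply/eqP; rewrite eqEsubset subsetT.
  have [x] := hv; rewrite (deg_closed_nbhd aG wcG (subsetP CT x (in_setT x))) cardC.
  by rewrite addnK ltnNge leq_addl oddM.
have sub3 : C \subset [set u; v; w].
  apply/subsetP => t tC; apply/negPn/negP => tS; apply: stuck.
  exact: (isolated_loop_gainable aG wcG vu wu vw Guv Guw zC (isolated z zC) (hpos z) tC tS).
have cardC : #|C| = 3.
  rewrite (_ : C = [set u; v; w]); last first.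
    apply/eqP; rewrite eqEsubset sub3; apply/subsetP=> x.
    by rewrite !inE => /orP[/orP[]|] /eqP->; rewrite ?eqxx ?Guv ?Guw ?orbT.
  by rewrite -setUA cardsU1 cards2 !inE !negb_or eq_sym vu eq_sym wu vw.
have [x] := hodd; case: (boolP (x \in C)) => [xC | xC].
  by rewrite (deg_closed_nbhd aG wcG xC) cardC addn2 /= oddM.
by rewrite -aG.2 deg_isolated ?oddM //; exact: isolated.
Qed.

End Gain.

End Swaps.

Theorem mainTheorem3 (V : finType) (k : V -> nat)
  (hpos : forall u, 1 <= k u)
  (hodd : exists u, odd (k u))
  (hv : exists v, (k v < #|V|.-1) || odd (k v - #|V|.-1))
  (G : graph V) (hG : multiloop G) (hdeg : forall u, deg G u = k u) :
  exists H : graph V,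
    clos_refl_trans (graph V) (admissible_step k) G H /\
    (forall u, emult H u u = (k u)./2).
Proof.
have aG : admissible k G by [].
have [n] := ubnP (\sum_u (k u)./2 - nloops G).
elim: n G aG {hG hdeg} => // n IHn G aG deficit.
have [full | /forallPn[u partial_u]] := boolP [forall u, emult G u u == (k u)./2].
  by exists G; split=> [|u]; [exact: rt_refl | exact/eqP/(forallP full)].
have [H GH gain] := loop_gainable_not_full hpos hodd hv aG partial_u.
have aH := reach_admissible aG GH.
have [|K [HK fullK]] := IHn H aH.
  have := nloops_le aH; lia.
by exists K; split=> //; exact: rt_trans HK.
Qed.
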